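(* Let $0\le t_o<t_f$ be real numbers, let $p:[t_o,t_f)\to\mathbb{R}$ and $q:[t_o,t_f)\to\mathbb{R}_{\ge0}$ be signals such that $q(t)=0\implies p(t)=0$ for every $t\in[t_o,t_f)$, and let $r(\tau)=\alpha\tau$ ($\tau>0$) with $\alpha\in\mathbb{R}$ (so $\dot r(0)=\alpha$). For $t_o\le t_0<t_1\le t_f$ with $\int_{t_0}^{t_1}q(t)\,dt>0$ define $\psi(t_0,t_1)=\dfrac{\int_{t_0}^{t_1}p(t)\,dt+r(t_1-t_0)}{\int_{t_0}^{t_1}q(t)\,dt}$. Let $\Psi=\{(t_0,t_1):t_o\le t_0<t_1\le t_f\}$, $\Psi_q=\{(t_0,t_1)\in\Psi:q(t)=0\ \forall t\in[t_0,t_1)\}$ and $\tilde\Psi_q=\{t\in[t_o,t_f):q(t)=0\}$. Then: (i) if $r(\tau)\le0$ for all $\tau>0$, $$\max_{(t_0,t_1)\in\Psi\setminus\Psi_q}\psi(t_0,t_1)=\max_{t\in[t_o,t_f)\setminus\tilde\Psi_q}\lim_{\Delta\to0}\psi(t,t+\Delta);$$ (ii) if $r(\tau)\ge0$ for all $\tau>0$, $$\min_{(t_0,t_1)\in\Psi\setminus\Psi_q}\psi(t_0,t_1)=\min_{t\in[t_o,t_f)\setminus\tilde\Psi_q}\lim_{\Delta\to0}\psi(t,t+\Delta);$$ where $\lim_{\Delta\to0}\psi(t,t+\Delta)=\dfrac{p(t)+\dot r(0)}{q(t)}$.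
   Context: This is the fractional function $\frac{\int p+r}{\int q+s}$ with the linear map $s$ in the denominator identically zero; $r$ is a continuous linear map $\mathbb{R}_{>0}\to\mathbb{R}$. *)

From HB Require Import structures.
From mathcomp Require Import all_boot all_order all_algebra.
From mathcomp Require Import all_classical all_reals all_analysis.
Set Implicit Arguments. Unset Strict Implicit. Unset Printing Implicit Defensive.
Import Order.TTheory GRing.Theory Num.Theory.
Import numFieldNormedType.Exports.
Local Open Scope classical_set_scope.
Local Open Scope ring_scope.

Definition rlin {R : realType} (alpha : R) (tau : R) : R := alpha * tau.

Definition psi {R : realType} (p q : R -> R) (alpha t0 t1 : R) : R :=
  (Rintegral (@lebesgue_measure R) `[t0, t1[ p + rlin alpha (t1 - t0))
  / Rintegral (@lebesgue_measure R) `[t0, t1[ q.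

Definition Psi {R : realType} (to tf : R) : set (R * R) :=
  [set x | to <= x.1 /\ x.1 < x.2 /\ x.2 <= tf].

Definition Psi_q {R : realType} (to tf : R) (q : R -> R) : set (R * R) :=
  [set x | Psi to tf x /\ forall t, x.1 <= t -> t < x.2 -> q t = 0].

Definition Psi_q_tilde {R : realType} (to tf : R) (q : R -> R) : set R :=
  [set t | to <= t /\ t < tf /\ q t = 0].

From HB Require Import structures.
From mathcomp Require Import all_boot all_order all_algebra.
From mathcomp Require Import all_classical all_reals all_analysis.
From mathcomp Require Import measurable_realfun lra.
Import Order.TTheory GRing.Theory Num.Theory.
Import numFieldNormedType.Exports.
Local Open Scope classical_set_scope.
Local Open Scope ring_scope.

(* Since q >= 0 is continuous, its integral over [t0, t1[ is positive as soon
   as q does not vanish identically there, and psi(t, t + D) tends to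
   (p t + alpha) / q t as D -> 0+ because the averages of p and q over
   [t, t + D[ tend to p t and q t; hence every pointwise ratio is bounded by
   the supremum of psi.  Conversely, if alpha <= 0 and m bounds the pointwise
   ratios, then p + alpha <= m q on [to, tf[ (where q = 0 this reads
   alpha <= 0, because p = 0 there), and integrating gives psi <= m.  The
   statement about infima follows by replacing (p, alpha) with (-p, -alpha). *)

Section Rintegral_co.
Context {R : realType}.
Notation mu := (@lebesgue_measure R).
Implicit Types (a b c d k : R) (f : R -> R).

Lemma lebesgue_measure_co a b : a <= b -> fine (mu `[a, b[) = b - a.
Proof.
move=> ab; rewrite lebesgue_measure_itv /= lte_fin.
case: ifPn => [_|]; first by rewrite -EFinB.
by rewrite -leNgt => ba; apply/eqP; rewrite eq_sym subr_eq0 eq_le ab ba.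
Qed.

Lemma integrable_cst_co a b k : mu.-integrable `[a, b[ (EFin \o cst k).
Proof.
apply/integrableP; split; first exact/measurable_EFinP.
rewrite (eq_integral (fun x => (`|k|)%:E)) // integral_cst //=.
rewrite lebesgue_measure_itv /=.
by case: ifP => _; rewrite ?mule0 -?EFinB -?EFinM ltry.
Qed.

Lemma Rintegral_cst_co a b k : a <= b -> \int[mu]_(x in `[a, b[) k = k * (b - a).
Proof. by move=> ab; rewrite Rintegral_cst // lebesgue_measure_co. Qed.

Lemma integrable_co_sub {a b c d f} : a <= c -> d <= b ->
  mu.-integrable `[a, b[ (EFin \o f) -> mu.-integrable `[c, d[ (EFin \o f).
Proof.
move=> ac db; apply: integrableS => // y /=; rewrite !in_itv /= => /andP[cy yd].
by rewrite (le_trans ac cy) (lt_le_trans yd db).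
Qed.

Lemma RintegralN (D : set R) f : measurable D -> mu.-integrable D (EFin \o f) ->
  \int[mu]_(x in D) (- f x) = - \int[mu]_(x in D) f x.
Proof.
move=> mD intf; rewrite -mulN1r -RintegralZl //.
by apply: eq_Rintegral => x _; rewrite mulN1r.
Qed.

Lemma ge0_subset_Rintegral (A B : set R) f : measurable A -> measurable B ->
  mu.-integrable B (EFin \o f) -> (forall x, B x -> 0 <= f x) -> A `<=` B ->
  \int[mu]_(x in A) f x <= \int[mu]_(x in B) f x.
Proof.
move=> mA mB intf f0 AB.
have intAf : mu.-integrable A (EFin \o f) by exact: integrableS intf.
rewrite /Rintegral fine_le ?integrable_fin_num //.
apply: ge0_subset_integral => //; first exact: measurable_int intf.
Qed.

Lemma Rintegral_co_bounds {a b lo hi f} :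
  a <= b -> mu.-integrable `[a, b[ (EFin \o f) ->
  (forall y, a <= y -> y < b -> lo <= f y <= hi) ->
  lo * (b - a) <= \int[mu]_(x in `[a, b[) f x <= hi * (b - a).
Proof.
move=> ab intf f_bnd; rewrite -!Rintegral_cst_co //.
apply/andP; split; apply: le_Rintegral => //; try exact: integrable_cst_co;
  by move=> y /=; rewrite in_itv /= => /andP[ay yb]; case/andP: (f_bnd y ay yb).
Qed.

End Rintegral_co.

Section average.
Context {R : realType}.
Notation mu := (@lebesgue_measure R).

Lemma cvg_average_right {to tf t : R} {f : R -> R} : to <= t -> t < tf ->
  {within `[to, tf[, continuous f} -> mu.-integrable `[to, tf[ (EFin \o f) ->
  (fun D => D^-1 * \int[mu]_(x in `[t, t + D[) f x) @ 0^'+ --> f t.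
Proof.
move=> tot ttf cf intf.
have /subspace_continuousP /(_ t) ct := cf.
have {ct} /cvgrPdist_le ct : f @ within `[to, tf[ (nbhs t) --> f t.
  by apply: ct; rewrite /= in_itv /= tot.
apply/cvgrPdist_le => e e0.
have := ct e e0; rewrite near_withinE => /nbhs_ballP[d /= d0 near_f].
near=> D.
have D0 : 0 < D by near: D; exact: nbhs_right_gt.
have Dd : D < d by near: D; exact: nbhs_right_lt.
have Dtf : t + D <= tf.
  by rewrite -lerBrDl ltW //; near: D; apply: nbhs_right_lt; rewrite subr_gt0.
have f_near y : t <= y -> y < t + D -> f t - e <= f y <= f t + e.
  move=> ty ytD; have : `|f t - f y| <= e.
    apply: near_f; last by rewrite /= in_itv /= (le_trans tot ty) (lt_le_trans ytD).
    rewrite /ball /= distrC ger0_norm ?subr_ge0 // ltrBlDl.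
    by rewrite (lt_le_trans ytD) // lerD2l ltW.
  by rewrite ler_norml => /andP[? ?]; apply/andP; split; lra.
have tD : t <= t + D by rewrite lerDl ltW.
have /andP[lo hi] := Rintegral_co_bounds tD (integrable_co_sub tot Dtf intf) f_near.
rewrite addrAC subrr add0r in lo hi.
rewrite -(mulKf (lt0r_neq0 D0) (f t)) -mulrBr normrM gtr0_norm ?invr_gt0 //.
by rewrite ler_pdivrMl // ler_norml; apply/andP; split; lra.
Unshelve. all: by end_near. Qed.

End average.

Lemma ereal_inf_EFin_image {R : realType} T (A : set T) (f : T -> R) :
  ereal_inf [set (f x)%:E | x in A] = (- ereal_sup [set (- f x)%:E | x in A])%E.
Proof. by rewrite /ereal_inf image_comp. Qed.

Section psi.
Context {R : realType}.
Notation mu := (@lebesgue_measure R).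
Implicit Types (p q : R -> R) (alpha : R).

Lemma psiN p q alpha (t0 t1 : R) : mu.-integrable `[t0, t1[ (EFin \o p) ->
  psi (fun x => - p x) q (- alpha) t0 t1 = - psi p q alpha t0 t1.
Proof. by move=> ip; rewrite /psi /rlin RintegralN // mulNr -opprD mulNr. Qed.

Lemma psi_le p q alpha (t0 t1 m : R) : t0 <= t1 ->
  mu.-integrable `[t0, t1[ (EFin \o p) -> mu.-integrable `[t0, t1[ (EFin \o q) ->
  0 < \int[mu]_(x in `[t0, t1[) q x ->
  (forall y, t0 <= y -> y < t1 -> p y + alpha <= m * q y) ->
  psi p q alpha t0 t1 <= m.
Proof.
move=> t01 ip iq q_gt0 pq_le; rewrite /psi /rlin ler_pdivrMr //.
rewrite -Rintegral_cst_co // -RintegralD //; last exact: integrable_cst_co.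
rewrite -RintegralZl //; apply: le_Rintegral => //.
- exact: eq_integrable (integrableD _ ip (integrable_cst_co _ _ _)).
- exact: eq_integrable (integrableZl _ m iq).
- by move=> y /=; rewrite in_itv /= => /andP[]; exact: pq_le.
Qed.

Lemma psi_cvg_ratio {to tf t : R} {p q} alpha : to <= t -> t < tf ->
  {within `[to, tf[, continuous p} -> {within `[to, tf[, continuous q} ->
  mu.-integrable `[to, tf[ (EFin \o p) -> mu.-integrable `[to, tf[ (EFin \o q) ->
  q t != 0 ->
  (fun D => psi p q alpha t (t + D)) @ 0^'+ --> (p t + alpha) / q t.
Proof.
move=> tot ttf cp cq ip iq qt0.
have avg_cvg f := @cvg_average_right R to tf t f tot ttf.
apply: cvg_trans
  (cvgM (cvgD (avg_cvg p cp ip) (cvg_cst alpha)) (cvgV qt0 (avg_cvg q cq iq))).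
apply: near_eq_cvg; near=> D.
have D0 : 0 < D by near: D; exact: nbhs_right_gt.
rewrite /psi /rlin addrAC subrr add0r /= invfM invrK mulrA mulrDl mulrAC.
by rewrite mulVf ?gt_eqF // mul1r.
Unshelve. all: by end_near. Qed.

End psi.

Section psi_extrema.
Context {R : realType}.
Notation mu := (@lebesgue_measure R).
Variables (to tf alpha : R) (p q : R -> R).
Hypothesis cp : {within `[to, tf[, continuous p}.
Hypothesis cq : {within `[to, tf[, continuous q}.
Hypothesis ip : mu.-integrable `[to, tf[ (EFin \o p).
Hypothesis iq : mu.-integrable `[to, tf[ (EFin \o q).
Hypothesis q_ge0 : forall t, to <= t -> t < tf -> 0 <= q t.
Hypothesis q0_p0 : forall t, to <= t -> t < tf -> q t = 0 -> p t = 0.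

Local Notation psis :=
  [set (psi p q alpha x.1 x.2)%:E | x in Psi to tf `\` Psi_q to tf q].
Local Notation ratios :=
  [set ((p t + alpha) / q t)%:E | t in `[to, tf[ `\` Psi_q_tilde to tf q].

Lemma ratio_in_ratios {t} : to <= t -> t < tf -> q t != 0 ->
  ratios ((p t + alpha) / q t)%:E.
Proof.
move=> tot ttf qt0; exists t => //; split; first by rewrite /= in_itv /= tot.
by case=> _ [_ /eqP]; rewrite (negbTE qt0).
Qed.

Lemma psi_in_psis {t D} : to <= t -> 0 < D -> t + D <= tf -> q t != 0 ->
  psis (psi p q alpha t (t + D))%:E.
Proof.
move=> tot D0 tDtf qt0; exists (t, t + D) => //; split.
  by split => //=; rewrite ltrDl.
by case=> _ /= /(_ t (lexx _)); rewrite ltrDl => /(_ D0) /eqP; rewrite (negbTE qt0).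
Qed.

Lemma Rintegral_q_gt0 {t0 t1 s} : to <= t0 -> t0 <= s -> s < t1 -> t1 <= tf ->
  q s != 0 -> 0 < \int[mu]_(x in `[t0, t1[) q x.
Proof.
move=> tot0 t0s st1 t1tf qs0.
have tos : to <= s := le_trans tot0 t0s.
have qs_gt0 : 0 < q s by rewrite lt_neqAle eq_sym qs0 q_ge0 // (lt_le_trans st1).
have avg_q := cvg_average_right tos (lt_le_trans st1 t1tf) cq iq.
near (0 : R)^'+ => D.
have D0 : 0 < D by near: D; exact: nbhs_right_gt.
have sDt1 : s + D <= t1.
  by rewrite -lerBrDl ltW //; near: D; apply: nbhs_right_lt; rewrite subr_gt0.
have : 0 < D^-1 * \int[mu]_(x in `[s, s + D[) q x.
  by near: D; exact: cvgr_gt avg_q _ qs_gt0.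
rewrite pmulr_rgt0 ?invr_gt0 // => /lt_le_trans; apply.
apply: ge0_subset_Rintegral => //.
- exact: integrable_co_sub tot0 t1tf iq.
- move=> x /=; rewrite in_itv /= => /andP[t0x xt1].
  by rewrite q_ge0 ?(le_trans tot0) ?(lt_le_trans xt1).
- by apply: subset_itv; rewrite bnd_simp.
Unshelve. all: by end_near. Qed.

Lemma ereal_sup_ratios_le_psis : (ereal_sup ratios <= ereal_sup psis)%E.
Proof.
apply: ge_ereal_sup => _ [t [/= + not_q0] <-]; rewrite in_itv /= => /andP[tot ttf].
have qt0 : q t != 0 by apply/eqP => qt0; exact: not_q0.
have psi_cvg : (fun D => (psi p q alpha t (t + D))%:E) @ 0^'+ -->
    ((p t + alpha) / q t)%:E.
  apply: cvg_EFin; first exact: nearW.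
  exact: psi_cvg_ratio alpha tot ttf cp cq ip iq qt0.
apply: cvge_to_le psi_cvg _.
near=> D; apply: ereal_sup_ubound.
have D0 : 0 < D by near: D; exact: nbhs_right_gt.
have tDtf : t + D <= tf.
  by rewrite -lerBrDl ltW //; near: D; apply: nbhs_right_lt; rewrite subr_gt0.
exact: psi_in_psis tot D0 tDtf qt0.
Unshelve. all: by end_near. Qed.

Lemma ereal_sup_ratios_dominates {m : R} :
  alpha <= 0 -> ereal_sup ratios = m%:E ->
  forall y, to <= y -> y < tf -> p y + alpha <= m * q y.
Proof.
move=> alpha_le0 supE y toy ytf.
have [qy0|qy0] := eqVneq (q y) 0; first by rewrite qy0 q0_p0 // mulr0 add0r.
have qy_gt0 : 0 < q y by rewrite lt_neqAle eq_sym qy0 q_ge0.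
have := ereal_sup_ubound (ratio_in_ratios toy ytf qy0).
by rewrite supE lee_fin ler_pdivrMr // mulrC.
Qed.

Lemma ereal_sup_psis_le_ratios : alpha <= 0 -> (ereal_sup psis <= ereal_sup ratios)%E.
Proof.
move=> alpha_le0.
apply: ge_ereal_sup => _ [[t0 t1] [[/= tot0 [t01 t1tf]] not_q0] <-].
have [s [t0s st1 qs0]] : exists s, [/\ t0 <= s, s < t1 & q s != 0].
  apply: contrapT => all_q0; apply: not_q0; split => // t t0t tt1 /=.
  by apply/eqP; apply: contrapT => /negP qt0; apply: all_q0; exists t.
have := ereal_sup_ubound
  (ratio_in_ratios (le_trans tot0 t0s) (lt_le_trans st1 t1tf) qs0).
case supE : (ereal_sup ratios) => [m| |];
  [move=> _|by rewrite !leey|by rewrite leeNy_eq].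
rewrite lee_fin; apply: psi_le (ltW t01) _ _ (Rintegral_q_gt0 tot0 t0s st1 t1tf qs0) _.
- exact: integrable_co_sub tot0 t1tf ip.
- exact: integrable_co_sub tot0 t1tf iq.
move=> y t0y yt1; have toy := le_trans tot0 t0y.
exact: ereal_sup_ratios_dominates alpha_le0 supE y toy (lt_le_trans yt1 t1tf).
Qed.

Lemma ereal_sup_psis : alpha <= 0 -> ereal_sup psis = ereal_sup ratios.
Proof.
move=> alpha_le0; apply: le_anti.
by rewrite ereal_sup_psis_le_ratios // ereal_sup_ratios_le_psis.
Qed.

End psi_extrema.

Theorem corollary1 (R : realType) (to tf alpha : R) (p q : R -> R) :
  0 <= to -> to < tf ->
  {within `[to, tf[, continuous p} ->
  {within `[to, tf[, continuous q} ->
  (@lebesgue_measure R).-integrable `[to, tf[ (EFin \o p) ->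
  (@lebesgue_measure R).-integrable `[to, tf[ (EFin \o q) ->
  (forall t, to <= t -> t < tf -> 0 <= q t) ->
  (forall t, to <= t -> t < tf -> q t = 0 -> p t = 0) ->
  (* the pointwise limit formula *)
  (forall t, to <= t -> t < tf -> q t != 0 ->
     (fun D => psi p q alpha t (t + D)) @ 0^'+ --> (p t + alpha) / q t) /\
  (* (i) *)
  ((forall tau, 0 < tau -> rlin alpha tau <= 0) ->
     ereal_sup [set (psi p q alpha x.1 x.2)%:E | x in Psi to tf `\` Psi_q to tf q]
     = ereal_sup [set ((p t + alpha) / q t)%:E
                 | t in `[to, tf[ `\` Psi_q_tilde to tf q]) /\
  (* (ii) *)
  ((forall tau, 0 < tau -> 0 <= rlin alpha tau) ->
     ereal_inf [set (psi p q alpha x.1 x.2)%:E | x in Psi to tf `\` Psi_q to tf q]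
     = ereal_inf [set ((p t + alpha) / q t)%:E
                 | t in `[to, tf[ `\` Psi_q_tilde to tf q]).
Proof.
move=> _ totf cp cq ip iq q_ge0 q0_p0.
have rlin1 : rlin alpha 1 = alpha by rewrite /rlin mulr1.
split=> [t tot ttf qt0|]; first exact: psi_cvg_ratio alpha tot ttf cp cq ip iq qt0.
split=> [r_le0|r_ge0].
  by apply: ereal_sup_psis => //; rewrite -rlin1 r_le0.
have cNp : {within `[to, tf[, continuous (fun x => - p x)}.
  by move=> x; exact: cvgN (cp x).
have iNp : (@lebesgue_measure R).-integrable `[to, tf[ (EFin \o (fun x => - p x)).
  exact: eq_integrable (integrableN ip).
rewrite !ereal_inf_EFin_image; congr (- _)%E.
rewrite (eq_imagel (f' := fun x => (psi (fun y => - p y) q (- alpha) x.1 x.2)%:E)).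
  rewrite (eq_imagel (f' := fun t => ((- p t + - alpha) / q t)%:E)).
    apply: ereal_sup_psis => //; first by move=> t tot ttf /(q0_p0 t tot ttf) ->; rewrite oppr0.
    by rewrite oppr_le0 -rlin1 r_ge0.
  by move=> t _; rewrite -opprD mulNr.
move=> [t0 t1] [[/= tot0 [_ t1tf]] _]; rewrite psiN //.
exact: integrable_co_sub tot0 t1tf ip.
Qed.
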